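(* Let $H=(S,A,\delta,\mathcal{O})$ be a POMDP with initial state $\ell_0$, $\mathcal{G}$ the game with probabilistic uncertainty constructed from it, and $\alpha_H$ an observation-based Player-1 strategy in $H$. Define the Player-1 strategy $\alpha_G$ in $\mathcal{G}$ by $\alpha_G(\rho_G)=\alpha_H(h^{-1}(\rho_G))$. Then for all finite prefixes $\rho_H$ of $H$, $\Pr^{\alpha_H}_{\ell_0}(\mathsf{Cone}(\rho_H))=\Pr^{\alpha_G}_{\ell_0}(\mathsf{Cone}(h(\rho_H)))$, where the left side is the measure in $H$ and the right side the measure in $\mathcal{G}$.
   Context: A POMDP is $H=(S,A,\delta,\mathcal{O})$ with $S$ a finite state set, $A$ a finite action set, $\delta:S\times A\to\mathcal{D}(S)$ ($\mathcal{D}$ = probability distributions), and $\mathcal{O}$ a partition of $S$; $\mathsf{obs}(s)$ is the block containing $s$, and $\mathsf{obs}(s_0a_0s_1\ldots s_n)=\mathsf{obs}(s_0)a_0\ldots\mathsf{obs}(s_n)$. An observation-based Player-1 strategy maps prefixes $s_0a_0\ldots s_n$ to $\mathcal{D}(A)$ and agrees on prefixes with equal observation sequences. The measure in $H$ from $\ell_0$: $\Pr(\mathsf{Cone}(\ell_0))=1$ and $\Pr(\mathsf{Cone}(\rho as'))=\Pr(\mathsf{Cone}(\rho))\alpha(\rho)(a)\delta(s,a)(s')$ where $s$ is the last state of $\rho$ ($\mathsf{Cone}(\rho)$ = plays with prefix $\rho$). The game $\mathcal{G}=(L,\Sigma_I,\Sigma_O,\Delta,\mathsf{un})$ constructed from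 $H$ has $L=S$, $\Sigma_I=A$, $\Sigma_O=\{\bot\}$, $\Delta(\ell,a,\bot)=\delta(\ell,a)$, and $\mathsf{un}(\ell)(\ell')=1/|\mathsf{obs}(\ell)|$ if $\mathsf{obs}(\ell')=\mathsf{obs}(\ell)$, else $0$. The map $h$ sends $s_0a_0s_1a_1\ldots s_n$ to $s_0a_0\bot s_1a_1\bot\ldots s_n$ (a bijection). For sequences $\rho=\ell_0\sigma^i_0\sigma^o_0\ldots\ell_n$, $\rho'=\ell'_0\tilde\sigma^i_0\tilde\sigma^o_0\ldots\ell'_m$ of $\mathcal{G}$, $\mathsf{ObsSeq}(\rho)(\rho')=\prod_{j=0}^n\mathsf{un}(\ell_j)(\ell'_j)$ if $m=n$ and all letters coincide, else $0$; $\mathsf{ActMt}(\rho)$ is the set of sequences with the same length and letters as $\rho$. Since Player 2 has only one strategy (always $\bot$), the measure in $\mathcal{G}$ from $\ell_0$ is: $\Pr^{\alpha}_{\ell_0}(\mathsf{Cone}(\ell_0))=1$ and, for $\rho$ with last location $\ell_n$, $\Pr(\mathsf{Cone}(\rho a\bot\ell_{n+1}))=\Pr(\mathsf{Cone}(\rho))\sum_{\rho'\in\mathsf{ActMt}(\rho)}\mathsf{ObsSeq}(\rho)(\rho')\alpha(\rho')(a)\Delta(\ell_n,a,\bot)(\ell_{n+1})$. *)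

From mathcomp Require Import all_boot all_order all_algebra.
Set Implicit Arguments. Unset Strict Implicit. Unset Printing Implicit Defensive.
Import Order.TTheory GRing.Theory Num.Theory.
Local Open Scope ring_scope.

Section POMDP.
Variables (R : realFieldType) (S A O : finType).

Definition is_dist (T : finType) (f : {ffun T -> R}) : Prop :=
  (forall x, 0 <= f x) /\ \sum_(x : T) f x = 1.

(* The POMDP H = (S, A, delta, Obs): the partition Obs of S is given by the
   fibres of obs : S -> O (obs s stands for the block containing s). *)

(* Finite prefixes of H: s0 a0 s1 ... an-1 sn  as  (s0, [(a0,s1);...]). *)
Definition Hpre := (S * seq (A * S))%type.
(* Finite prefixes of G: l0 a0 bot l1 ... as (l0, [(a0,bot,l1);...]);
   Sigma_O = {bot} is rendered as unit (bot = tt). *)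
Definition Gpre := (S * seq (A * unit * S))%type.

Definition obsH (obs : S -> O) (rho : Hpre) : O * seq (A * O) :=
  (obs rho.1, [seq (p.1, obs p.2) | p <- rho.2]).

Definition stratH := Hpre -> {ffun A -> R}.
Definition stratG := Gpre -> {ffun A -> R}.

Definition is_stratH (alpha : stratH) : Prop := forall rho, is_dist (alpha rho).

Definition observation_based (obs : S -> O) (alpha : stratH) : Prop :=
  forall rho rho', obsH obs rho = obsH obs rho' -> alpha rho = alpha rho'.

Definition h (rho : Hpre) : Gpre := (rho.1, [seq (p.1, tt, p.2) | p <- rho.2]).
Definition hinv (rho : Gpre) : Hpre := (rho.1, [seq (p.1.1, p.2) | p <- rho.2]).

Definition alphaG_of (alphaH : stratH) : stratG := fun rhoG => alphaH (hinv rhoG).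

Definition lastH (rho : Hpre) : S := last rho.1 [seq p.2 | p <- rho.2].
Definition lastG (rho : Gpre) : S := last rho.1 [seq p.2 | p <- rho.2].

Fixpoint PrH_rev (delta : S -> A -> {ffun S -> R}) (alpha : stratH) (l0 s0 : S)
    (rrs : seq (A * S)) : R :=
  match rrs with
  | [::] => (s0 == l0)%:R
  | (a, s') :: t =>
      let rho := (s0, rev t) in
      PrH_rev delta alpha l0 s0 t * alpha rho a * delta (lastH rho) a s'
  end.

Definition PrH delta alpha l0 (rho : Hpre) : R := PrH_rev delta alpha l0 rho.1 (rev rho.2).

Definition Delta (delta : S -> A -> {ffun S -> R}) (l : S) (a : A) (o : unit)
  : {ffun S -> R} := delta l a.

Definition un (obs : S -> O) (l l' : S) : R :=
  if obs l' == obs l then (#|[set s | obs s == obs l]|%:R)^-1 else 0.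

Definition locs (rho : Gpre) : seq S := rho.1 :: [seq p.2 | p <- rho.2].
Definition letters (rho : Gpre) : seq (A * unit) := [seq p.1 | p <- rho.2].

Definition ObsSeq (obs : S -> O) (rho rho' : Gpre) : R :=
  if (size rho.2 == size rho'.2) && (letters rho == letters rho') then
    \prod_(j < (size rho.2).+1) un obs (nth rho.1 (locs rho) j) (nth rho'.1 (locs rho') j)
  else 0.

(* Elements of ActMt(rho): same letters, locations given by a tuple. *)
Definition relabel (rho : Gpre) (t : (size rho.2).+1.-tuple S) : Gpre :=
  (thead t, zip (letters rho) (behead t)).

(* Cone measure in G (Player 2 has only the strategy "always bot"). *)
Fixpoint PrG_rev (obs : S -> O) (delta : S -> A -> {ffun S -> R}) (alpha : stratG)
    (l0 s0 : S) (rrs : seq (A * unit * S)) : R :=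
  match rrs with
  | [::] => (s0 == l0)%:R
  | (a, o, l') :: t =>
      let rho : Gpre := (s0, rev t) in
      PrG_rev obs delta alpha l0 s0 t *
      \sum_(t' : (size rho.2).+1.-tuple S)
         (ObsSeq obs rho (relabel t') * alpha (relabel t') a *
          Delta delta (lastG rho) a o l')
  end.

Definition PrG obs delta alpha l0 (rho : Gpre) : R :=
  PrG_rev obs delta alpha l0 rho.1 (rev rho.2).

End POMDP.

From mathcomp Require Import all_boot all_order all_algebra.
Import Order.TTheory GRing.Theory Num.Theory.
Set Implicit Arguments. Unset Strict Implicit. Unset Printing Implicit Defensive.
Local Open Scope ring_scope.

(* Player 1 in G plays, after a prefix rho, the average of alpha_H over all
   relabellings of rho, weighted by ObsSeq.  Each weight is a product of the
   uniform distributions on the observation blocks of the locations of rho, so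
   the weights sum to 1, and a relabelling has nonzero weight only if it is
   observationally indistinguishable from rho; since alpha_H is
   observation-based, the average is just alpha_H at rho.  Hence both cone
   measures satisfy the same recursion, and induction on the prefix concludes. *)

Lemma sum_tuple_prod (R : nzSemiRingType) (T : finType) (k : nat)
    (F : 'I_k -> T -> R) :
  \sum_(t : k.-tuple T) \prod_(j < k) F j (tnth t j) =
  \prod_(j < k) \sum_(x : T) F j x.
Proof.
rewrite bigA_distr_bigA /=.
rewrite (reindex (fun f : {ffun 'I_k -> T} => [tuple f i | i < k])) /=.
  by apply: eq_bigr => f _; apply: eq_bigr => j _; rewrite tnth_mktuple.
exists (fun t : k.-tuple T => [ffun i => tnth t i]) => f _.
  by apply/ffunP => i; rewrite ffunE tnth_mktuple.
by apply: eq_from_tnth => i; rewrite tnth_mktuple ffunE.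
Qed.

Section Uniform.
Variables (R : realFieldType) (S O : finType) (obs : S -> O).

Lemma sum_un (l : S) : \sum_(l' : S) un R obs l l' = 1.
Proof.
rewrite /un -big_mkcond /= sumr_const.
rewrite [X in _ *+ X](_ : _ = #|[set s | obs s == obs l]|); last by rewrite cardsE.
rewrite -(mulr_natr (_^-1)) mulVf // pnatr_eq0 -lt0n card_gt0.
by apply/set0Pn; exists l; rewrite inE.
Qed.

Lemma un_neq0_obs (l l' : S) : un R obs l l' != 0 -> obs l' = obs l.
Proof. by rewrite /un; case: (obs l' =P obs l) => // _; rewrite eqxx. Qed.

End Uniform.

Section Relabel.
Variables (S A O : finType).
Variables (rho : Gpre S A) (t : (size rho.2).+1.-tuple S).

Lemma size_behead_relabel : size (behead t) = size (letters rho).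
Proof. by rewrite size_behead size_tuple size_map. Qed.

Lemma locs_relabel : locs (relabel t) = t.
Proof.
rewrite /locs /= [map _ _]unzip2_zip ?size_behead_relabel //.
by case: t => [[|x l] ?].
Qed.

Lemma letters_relabel : letters (relabel t) = letters rho.
Proof. by rewrite /letters /= [map _ _]unzip1_zip ?size_behead_relabel. Qed.

Lemma size_relabel : size (relabel t).2 = size rho.2.
Proof. by rewrite -!(size_map fst) -/(letters _) letters_relabel. Qed.

Lemma ObsSeq_relabel (R : realFieldType) (obs : S -> O) :
  ObsSeq R obs rho (relabel t) =
  \prod_(j < (size rho.2).+1) un R obs (nth rho.1 (locs rho) j) (tnth t j).
Proof.
rewrite /ObsSeq size_relabel letters_relabel !eqxx /=.
by apply: eq_bigr => j _; rewrite locs_relabel (tnth_nth (relabel t).1).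
Qed.

End Relabel.

Lemma obsH_hinv (S A O : finType) (obs : S -> O) (rho : Gpre S A) :
  obsH obs (hinv rho) =
  (head (obs rho.1) (map obs (locs rho)),
   zip [seq p.1 | p <- letters rho] (behead (map obs (locs rho)))).
Proof.
rewrite /obsH /hinv /locs /letters /=; congr pair.
by elim: rho.2 => [|[[a u] s] l IH] //=; rewrite IH.
Qed.

Lemma hK (S A : finType) : cancel (@h S A) (@hinv S A).
Proof.
by case=> s0 l; rewrite /h /hinv /= -map_comp map_id_in //; case.
Qed.

Lemma lastG_h (S A : finType) (rho : Hpre S A) : lastG (h rho) = lastH rho.
Proof. by rewrite /lastG /lastH /h /= -map_comp. Qed.

Section ObservationBased.
Variables (R : realFieldType) (S A O : finType) (obs : S -> O).
Variable alphaH : stratH R S A.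
Hypothesis alphaH_obs : observation_based obs alphaH.

Lemma alphaH_relabel (rho : Gpre S A) (t : (size rho.2).+1.-tuple S) :
  ObsSeq R obs rho (relabel t) != 0 ->
  alphaH (hinv (relabel t)) = alphaH (hinv rho).
Proof.
rewrite ObsSeq_relabel => /prodf_neq0 un_neq0.
apply: alphaH_obs; rewrite !obsH_hinv letters_relabel locs_relabel.
suff -> : map obs t = map obs (locs rho) by [].
have size_locs : size (locs rho) = (size rho.2).+1 by rewrite /= size_map.
apply: (@eq_from_nth _ (obs rho.1)) => [|i]; first by rewrite !size_map size_tuple.
rewrite size_map size_tuple => lt_i.
rewrite !(nth_map rho.1) ?size_tuple ?size_locs //.
by have /un_neq0_obs := un_neq0 (Ordinal lt_i) isT; rewrite (tnth_nth rho.1).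
Qed.

Lemma average_alphaG (rho : Gpre S A) (a : A) :
  \sum_(t : (size rho.2).+1.-tuple S)
     ObsSeq R obs rho (relabel t) * alphaG_of alphaH (relabel t) a =
  alphaH (hinv rho) a.
Proof.
have weights_sum1 :
    \sum_(t : (size rho.2).+1.-tuple S) ObsSeq R obs rho (relabel t) = 1.
  rewrite (eq_bigr _ (fun t _ => ObsSeq_relabel t R obs)).
  rewrite (sum_tuple_prod (fun j => un R obs (nth rho.1 (locs rho) j))).
  by rewrite big1 // => j _; apply: sum_un.
rewrite -[RHS]mul1r -weights_sum1 big_distrl /=; apply: eq_bigr => t _.
by have [->|/alphaH_relabel <-] := eqVneq (ObsSeq R obs rho (relabel t)) 0;
  rewrite ?mul0r.
Qed.

Lemma PrH_rev_PrG_rev (delta : S -> A -> {ffun S -> R}) (l0 s0 : S)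
    (r : seq (A * S)) :
  PrH_rev delta alphaH l0 s0 r =
  PrG_rev obs delta (alphaG_of alphaH) l0 s0 [seq (p.1, tt, p.2) | p <- r].
Proof.
elim: r => [|[a s'] r IH] //=.
(* [/=] has unfolded the [rev] hidden in the prefix into [catrev _ [::]]. *)
rewrite IH -!mulrA -big_distrl (average_alphaG (s0, _)) -/(rev _) -map_rev.
by rewrite -[(s0, map _ _)]/(h (s0, rev r)) hK /Delta lastG_h.
Qed.

End ObservationBased.

Theorem lemma5 (R : realFieldType) (S A O : finType)
  (delta : S -> A -> {ffun S -> R}) (obs : S -> O) (l0 : S)
  (alphaH : stratH R S A) :
  (forall s a, is_dist (delta s a)) ->
  is_stratH alphaH ->
  observation_based obs alphaH ->
  forall rhoH : Hpre S A,
    PrH delta alphaH l0 rhoH = PrG obs delta (alphaG_of alphaH) l0 (h rhoH).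
Proof.
(* Neither the kernel nor the strategy needs to be a distribution. *)
move=> _ _ alphaH_obs [s0 l].
by rewrite /PrH /PrG /= -map_rev (PrH_rev_PrG_rev alphaH_obs).
Qed.
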